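(* Let $A$ be an $\mathfrak h$-trivial formal deformation of the $\mathfrak a$-algebra $U(\mathfrak{sl}_2)$. Then $A$ is $\mathfrak b$-trivial: there exists a $\mathbb k[[h]]$-algebra isomorphism $g:U(\mathfrak{sl}_2)[[h]]\to A$ such that $g(H)=H$, $g(X^-)=X^-$, and $\bar g:U(\mathfrak{sl}_2)\to A/hA$ is an isomorphism of $\mathfrak a$-algebras. Moreover, such a $g$ is unique.
   Context: $\mathbb k$ is a field of characteristic zero, and $\mathbb k[[h]]$ is the ring of formal power series over $\mathbb k$. For a $\mathbb k$-vector space $V_0$, $V_0[[h]]$ denotes the module of formal series $\sum_{m\ge0}v_mh^m$ with $v_m\in V_0$. A $\mathbb k[[h]]$-module is topologically free if it is isomorphic to some $V_0[[h]]$. For a $\mathbb k[[h]]$-linear map $g$, $\bar g$ denotes the induced map modulo $h$. $\mathfrak a$ is the Lie algebra over $\mathbb k$ generated by $H,X^-,X^+$ subject to $[H,X^\pm]=\pm2X^\pm$. An $\mathfrak a$-algebra is an algebra with a structural homomorphism from $U(\mathfrak a)$; homomorphisms of such algebras commute with structural maps. $U(\mathfrak{sl}_2)$ is an $\mathfrak a$-algebra via the canonical projection (Chevalley generators $H,X^\pm$). We set $U_h(\mathfrak a):=U(\mathfrak a)[[h]]$. A formal deformation of the $\mathfrak a$-algebra $U(\mathfrak{sl}_2)$ is a $U_h(\mathfrak a)$-algebra $A$ that is topologically free as a $\mathbb k[[h]]$-module, with $A/hA\cong U(\mathfrak{sl}_2)$ as $\mathfrak a$-algebras (here $A/hA$ is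 an $\mathfrak a$-algebra via $U_h(\mathfrak a)/h\cong U(\mathfrak a)$). The images of $H,X^\pm$ in $A$ are again denoted $H,X^\pm$. Such an $A$ is $\mathfrak h$-trivial if there is a $\mathbb k[[h]]$-algebra isomorphism $g:U(\mathfrak{sl}_2)[[h]]\to A$ with $g(H)=H$ and $\bar g$ an isomorphism of $\mathfrak a$-algebras. *)

From HB Require Import structures.
From mathcomp Require Import all_boot all_order all_algebra.
Set Implicit Arguments. Unset Strict Implicit. Unset Printing Implicit Defensive.
Import GRing.Theory.
Local Open Scope ring_scope.

(* An element  sum_m v_m h^m  of V0[[h]] is the sequence  v : nat -> V0. *)

Section Series.
Variable k : fieldType.

Definition ps_cst (c : k) : nat -> k := fun n => if n is 0%N then c else 0.
Definition ps_one : nat -> k := ps_cst 1.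
Definition ps_h : nat -> k := fun n => (n == 1%N)%:R.
Definition ps_add (s t : nat -> k) : nat -> k := fun n => s n + t n.
Definition ps_mul (s t : nat -> k) : nat -> k :=
  fun n => \sum_(i < n.+1) s i * t (n - i)%N.

Definition ser_cst (V : zmodType) (v : V) : nat -> V :=
  fun n => if n is 0%N then v else 0.
Definition ser_add (V : zmodType) (v w : nat -> V) : nat -> V :=
  fun n => v n + w n.
Definition ser_act (V : lmodType k) (s : nat -> k) (v : nat -> V) : nat -> V :=
  fun n => \sum_(i < n.+1) s i *: v (n - i)%N.
Definition ser_mul (R : nzRingType) (f g : nat -> R) : nat -> R :=
  fun n => \sum_(i < n.+1) f i * g (n - i)%N.

Definition kh_algebra (A : nzRingType) (act : (nat -> k) -> A -> A) : Prop :=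
  [/\ forall s, {morph act s : a b / a + b},
      forall s t a, act (ps_add s t) a = act s a + act t a,
      forall s t a, act (ps_mul s t) a = act s (act t a),
      forall a, act ps_one a = a &
      forall s a b, act s (a * b) = act s a * b /\ act s (a * b) = a * act s b].

Definition top_free (A : nzRingType) (act : (nat -> k) -> A -> A) : Prop :=
  exists (V0 : lmodType k) (phi : A -> nat -> V0),
    [/\ bijective phi,
        {morph phi : a b / a + b >-> ser_add a b} &
        forall s a, phi (act s a) = ser_act s (phi a)].

Definition in_hA (A : nzRingType) (act : (nat -> k) -> A -> A) (a : A) : Prop :=
  exists b, a = act ps_h b.

(* defining relations of the Lie algebra a (images of H, X^-, X^+) *)
Definition a_rel (R : nzRingType) (H Xm Xp : R) : Prop :=
  H * Xp - Xp * H = Xp *+ 2 /\ H * Xm - Xm * H = - (Xm *+ 2).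

Definition sl2_rel (R : nzRingType) (H Xm Xp : R) : Prop :=
  [/\ H * Xp - Xp * H = Xp *+ 2, H * Xm - Xm * H = - (Xm *+ 2)
    & Xp * Xm - Xm * Xp = H].

Definition alg_hom (U B : algType k) (f : U -> B) : Prop :=
  [/\ {morph f : x y / x + y}, {morph f : x y / x * y}, f 1 = 1
    & forall (c : k) x, f (c *: x) = c *: f x].

(* (U, H, X^-, X^+) is the universal enveloping algebra U(sl2): the
   initial k-algebra with three elements satisfying the sl2 relations *)
Definition is_Usl2 (U : algType k) (H Xm Xp : U) : Prop :=
  sl2_rel H Xm Xp /\
  forall (B : algType k) (bH bm bp : B), sl2_rel bH bm bp ->
    exists f : U -> B,
      [/\ alg_hom f, f H = bH, f Xm = bm, f Xp = bp &
          forall f' : U -> B, alg_hom f' -> f' H = bH -> f' Xm = bm ->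
            f' Xp = bp -> f' =1 f].

Definition formal_deformation (U : algType k) (HU XmU XpU : U)
    (A : nzRingType) (act : (nat -> k) -> A -> A) (HA XmA XpA : A) : Prop :=
  [/\ kh_algebra act, top_free act, a_rel HA XmA XpA &
      (* A/hA = U as a-algebras, via the projection pi with kernel hA *)
      exists pi : A -> U,
        [/\ [/\ {morph pi : x y / x + y}, {morph pi : x y / x * y}, pi 1 = 1
              & forall c a, pi (act (ps_cst c) a) = c *: pi a],
            forall u, exists a, pi a = u,
            forall a, pi a = 0 <-> in_hA act a
          & [/\ pi HA = HU, pi XmA = XmU & pi XpA = XpU]]].

Definition kh_alg_iso (U : algType k) (A : nzRingType)
    (act : (nat -> k) -> A -> A) (g : (nat -> U) -> A) : Prop :=
  [/\ bijective g,
      {morph g : f f' / ser_add f f' >-> f + f'},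
      {morph g : f f' / ser_mul f f' >-> f * f'},
      g (ser_cst 1) = 1 &
      forall s f, g (ser_act s f) = act s (g f)].

(* gbar : U(sl2) -> A/hA, u |-> class of g(u), is an isomorphism of
   a-algebras (bijective, and sending H, X^-, X^+ to the classes of the
   structural elements; multiplicativity is inherited from g) *)
Definition bar_a_iso (U : algType k) (HU XmU XpU : U) (A : nzRingType)
    (act : (nat -> k) -> A -> A) (HA XmA XpA : A) (g : (nat -> U) -> A) : Prop :=
  [/\ forall u v, in_hA act (g (ser_cst u) - g (ser_cst v)) -> u = v,
      forall a, exists u, in_hA act (a - g (ser_cst u)),
      in_hA act (g (ser_cst HU) - HA),
      in_hA act (g (ser_cst XmU) - XmA) &
      in_hA act (g (ser_cst XpU) - XpA)].

Definition h_trivializing (U : algType k) (HU XmU XpU : U) (A : nzRingType)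
    (act : (nat -> k) -> A -> A) (HA XmA XpA : A) (g : (nat -> U) -> A) : Prop :=
  [/\ kh_alg_iso act g, g (ser_cst HU) = HA
    & bar_a_iso HU XmU XpU act HA XmA XpA g].

Definition b_trivializing (U : algType k) (HU XmU XpU : U) (A : nzRingType)
    (act : (nat -> k) -> A -> A) (HA XmA XpA : A) (g : (nat -> U) -> A) : Prop :=
  [/\ kh_alg_iso act g, g (ser_cst HU) = HA, g (ser_cst XmU) = XmA
    & bar_a_iso HU XmU XpU act HA XmA XpA g].

End Series.

(* Write the structural X^- of A as g(x) for the given h-trivialization g.  Each
   coefficient of x has ad H-weight -2 and x_0 = X^-; in U(sl2) a vector of weight -2
   factors as X^- q with q in the subalgebra generated by H and X^+ X^-, so x = X^- alpha
   with alpha = 1 mod h and commuting with H.  Twisting X^+ by the inverse of g(alpha),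
   the images H, X^- and g(alpha)^-1 g(X^+) satisfy the sl2 relations in A; the induced
   algebra map U(sl2) -> A is the identity mod h, and its k[[h]]-linear extension to
   U(sl2)[[h]] is the required isomorphism.  Two such isomorphisms agree on H and X^-,
   so the difference of their values on X^+ is, coefficientwise, a vector of weight 2
   killed by ad X^-; as ad X^+ is locally nilpotent on U(sl2), it vanishes. *)

From HB Require Import structures.
From mathcomp Require Import all_boot all_order all_algebra zify.
From Stdlib Require Import ClassicalEpsilon FunctionalExtensionality.
Set Implicit Arguments. Unset Strict Implicit. Unset Printing Implicit Defensive.
Import GRing.Theory.
Local Open Scope ring_scope.

Definition br (R : nzRingType) (a b : R) := a * b - b * a.

Section Bracket.
Variable R : nzRingType.
Implicit Types a b x y : R.

Lemma brDr a x y : br a (x + y) = br a x + br a y.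
Proof. by rewrite /br mulrDr mulrDl opprD addrACA. Qed.

Lemma brNr a x : br a (- x) = - br a x.
Proof. by rewrite /br mulrN mulNr opprK opprB addrC. Qed.

Lemma brBr a x y : br a (x - y) = br a x - br a y.
Proof. by rewrite brDr brNr. Qed.

Lemma br0r a : br a 0 = 0.
Proof. by rewrite /br mulr0 mul0r subrr. Qed.

Lemma brMnr a x n : br a (x *+ n) = br a x *+ n.
Proof. by elim: n => [|n IH]; rewrite ?br0r // !mulrSr brDr IH. Qed.

Lemma brMr a x y : br a (x * y) = br a x * y + x * br a y.
Proof. by rewrite /br mulrBl mulrBr !mulrA subrKA. Qed.

Lemma br_anti a b : br a b = - br b a.
Proof. by rewrite /br opprB. Qed.

Lemma brDl a b x : br (a + b) x = br a x + br b x.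
Proof. by rewrite !(br_anti _ x) brDr opprD. Qed.

Lemma brNl a x : br (- a) x = - br a x.
Proof. by rewrite !(br_anti _ x) brNr. Qed.

Lemma br0l x : br 0 x = 0.
Proof. by rewrite br_anti br0r oppr0. Qed.

Lemma brMnl a x n : br (a *+ n) x = br a x *+ n.
Proof. by elim: n => [|n IH]; rewrite ?br0l // !mulrSr brDl IH. Qed.

Lemma br_eq0 a b : (br a b == 0) = (a * b == b * a).
Proof. exact: subr_eq0. Qed.

Lemma br_jacobi a b x : br a (br b x) = br b (br a x) + br (br a b) x.
Proof.
rewrite [br b x]/br brBr !brMr /br.
set p := (a * b - b * a) * x; set q := b * (a * x - x * a).
set r := (a * x - x * a) * b; set s := x * (a * b - b * a).
by rewrite opprD (addrC p) addrACA.
Qed.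

End Bracket.

Lemma brZr (k : fieldType) (R : algType k) (a x : R) (c : k) :
  br a (c *: x) = c *: br a x.
Proof. by rewrite /br scalerBr scalerAr scalerAl. Qed.

Section Char0.
Variable k : fieldType.
Hypothesis char0 : [pchar k] =i pred0.

Lemma char0_mulrn_eq0 (V : lmodType k) (x : V) n :
  (0 < n)%N -> x *+ n = 0 -> x = 0.
Proof.
move=> n_gt0; rewrite -scaler_nat => /eqP; rewrite scaler_eq0 => /orP[|/eqP //].
by rewrite ((pcharf0P _).1 char0) eqn0Ngt n_gt0.
Qed.

Lemma char0_intr_neq0 (n : int) : n != 0 -> (n%:~R : k) != 0.
Proof.
have natr_eq0 m : (m%:R : k) = 0 -> m = 0%N.
  by move=> /eqP; rewrite ((pcharf0P _).1 char0) => /eqP.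
case: n => m nz; apply/eqP.
- by move/natr_eq0 => m0; rewrite m0 in nz.
- by rewrite NegzE intrN => /eqP; rewrite oppr_eq0 => /eqP /natr_eq0.
Qed.

End Char0.

(** * Generated subalgebras and the universal property of U(sl2) *)

Section GeneratedSubalgebra.
Variables (k : fieldType) (U : algType k).

Inductive gen_alg (S : U -> Prop) : U -> Prop :=
| gen_base x : S x -> gen_alg S x
| gen1 : gen_alg S 1
| genD x y : gen_alg S x -> gen_alg S y -> gen_alg S (x + y)
| genM x y : gen_alg S x -> gen_alg S y -> gen_alg S (x * y)
| genZ (c : k) x : gen_alg S x -> gen_alg S (c *: x).

Variable S : U -> Prop.

Lemma gen0 : gen_alg S 0.
Proof. by rewrite -(scale0r 1); apply/genZ/gen1. Qed.

Lemma genB x y : gen_alg S x -> gen_alg S y -> gen_alg S (x - y).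
Proof. by move=> Sx Sy; apply: genD => //; rewrite -scaleN1r; apply: genZ. Qed.

Lemma gen_natr n : gen_alg S n%:R.
Proof. by rewrite -scaler_nat; apply/genZ/gen1. Qed.

Lemma gen_comm :
  (forall a b, S a -> S b -> a * b = b * a) ->
  forall x y, gen_alg S x -> gen_alg S y -> x * y = y * x.
Proof.
move=> commS.
have commSr y : gen_alg S y -> forall a, S a -> a * y = y * a.
  elim=> [x Sx||x z _ IHx _ IHz|x z _ IHx _ IHz|c x _ IHx] a Sa.
  - exact: commS.
  - by rewrite mulr1 mul1r.
  - by rewrite mulrDr mulrDl IHx ?IHz.
  - by rewrite mulrA IHx // -!mulrA IHz.
  - by rewrite -scalerAl -scalerAr IHx.
move=> x y Sx; elim: Sx y => [x0 Sx||x0 z _ IHx _ IHz|x0 z _ IHx _ IHz|c x0 _ IHx] y Sy.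
- by rewrite commSr.
- by rewrite mulr1 mul1r.
- by rewrite mulrDr mulrDl IHx ?IHz.
- by rewrite -mulrA IHz // !mulrA IHx.
- by rewrite -scalerAl -scalerAr IHx.
Qed.

Lemma gen_mul_swap x :
  (forall s, S s -> exists2 s', gen_alg S s' & s * x = x * s') ->
  forall q, gen_alg S q -> exists2 q', gen_alg S q' & q * x = x * q'.
Proof.
move=> swapS q; elim=> [s Ss||a b _ [a' Sa' ea] _ [b' Sb' eb]
  |a b _ [a' Sa' ea] _ [b' Sb' eb]|c a _ [a' Sa' ea]].
- exact: swapS.
- by exists 1; [exact: gen1 | rewrite mulr1 mul1r].
- by exists (a' + b'); [exact: genD | rewrite mulrDl mulrDr ea eb].
- by exists (a' * b'); [exact: genM | rewrite -mulrA eb mulrA ea mulrA].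
- by exists (c *: a'); [exact: genZ | rewrite -scalerAl ea scalerAr].
Qed.

Lemma gen_mul_swapX x n :
  (forall s, S s -> exists2 s', gen_alg S s' & s * x = x * s') ->
  forall q, gen_alg S q -> exists2 q', gen_alg S q' & q * x ^+ n = x ^+ n * q'.
Proof.
move=> swapS; elim: n => [|n IHn] q Sq; first by exists q; rewrite ?expr0 ?mulr1 ?mul1r.
have [q1 Sq1 e1] := IHn q Sq; have [q2 Sq2 e2] := gen_mul_swap swapS Sq1.
by exists q2 => //; rewrite exprSr mulrA e1 -mulrA e2 mulrA.
Qed.

End GeneratedSubalgebra.

Definition in_gen (k : fieldType) (U : algType k) (S : U -> Prop) (u : U) : bool :=
  if excluded_middle_informative (gen_alg S u) then true else false.

Lemma in_genP (k : fieldType) (U : algType k) (S : U -> Prop) u :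
  reflect (gen_alg S u) (in_gen S u).
Proof. by rewrite /in_gen; case: excluded_middle_informative => h; constructor. Qed.

Lemma in_gen_subalg_closed (k : fieldType) (U : algType k) (S : U -> Prop) :
  subalg_closed (in_gen S).
Proof.
split; first by rewrite unfold_in; apply/in_genP/gen1.
- move=> c x y; rewrite !unfold_in => /in_genP Sx /in_genP Sy.
  by apply/in_genP/genD => //; apply: genZ.
- by move=> x y; rewrite !unfold_in => /in_genP Sx /in_genP Sy; apply/in_genP/genM.
Qed.

HB.instance Definition _ (k : fieldType) (U : algType k) (S : U -> Prop) :=
  GRing.isSubalgClosed.Build k U (in_gen S)
    (GRing.subalg_closed_semi (in_gen_subalg_closed S)).

Definition gen_subalg (k : fieldType) (U : algType k) (S : U -> Prop) :=
  {u : U | in_gen S u}.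
HB.instance Definition _ (k : fieldType) (U : algType k) (S : U -> Prop) :=
  [isSub for (@sval U (in_gen S)) : gen_subalg S -> U].
HB.instance Definition _ (k : fieldType) (U : algType k) (S : U -> Prop) :=
  [Choice of gen_subalg S by <:].
HB.instance Definition _ (k : fieldType) (U : algType k) (S : U -> Prop) :=
  [SubChoice_isSubAlgebra of gen_subalg S by <:].

Section AlgHom.
Variables (k : fieldType) (U B : algType k) (f : U -> B).
Hypothesis hf : alg_hom f.

Lemma alg_hom0 : f 0 = 0.
Proof. by case: hf => fD _ _ _; apply: (@addrI _ (f 0)); rewrite -fD !addr0. Qed.

Lemma alg_homN x : f (- x) = - f x.
Proof. by case: hf => fD _ _ _; apply: (@addrI _ (f x)); rewrite -fD !subrr alg_hom0. Qed.

Lemma alg_homMn x n : f (x *+ n) = f x *+ n.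
Proof.
case: hf => fD _ _ _.
by elim: n => [|n IHn]; rewrite ?mulr0n ?alg_hom0 // !mulrS fD IHn.
Qed.

Lemma alg_hom_br x y : f (br x y) = br (f x) (f y).
Proof. by case: hf => fD fM _ _; rewrite /br fD alg_homN !fM. Qed.

End AlgHom.

Section UniversalProperty.
Variables (k : fieldType) (U : algType k) (H F E : U).
Hypothesis hU : is_Usl2 H F E.

Lemma alg_hom_sl2_rel (B : algType k) (f : U -> B) :
  alg_hom f -> sl2_rel (f H) (f F) (f E).
Proof.
have [[r1 r2 r3] _] := hU => hf.
by split; [move: r1 | move: r2 | move: r3] => /(congr1 f);
  rewrite (alg_hom_br hf) ?(alg_homN hf) ?(alg_homMn hf).
Qed.

Lemma Usl2_hom_eq (B : algType k) (f f' : U -> B) :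
  alg_hom f -> alg_hom f' -> f H = f' H -> f F = f' F -> f E = f' E -> f =1 f'.
Proof.
move=> hf hf' eH eF eE u.
have [_ /(_ _ _ _ _ (alg_hom_sl2_rel hf)) [f0 [_ _ _ _ uniq]]] := hU.
by rewrite (uniq f) // (uniq f').
Qed.

Lemma alg_hom_id : alg_hom (@id U).
Proof. by split. Qed.

Lemma Usl2_gen u : gen_alg (fun x => [\/ x = H, x = F | x = E]) u.
Proof.
set S := fun x => _.
have inS x : gen_alg S x -> in_gen S x by move=> Sx; apply/in_genP.
pose sub x (Sx : S x) : gen_subalg S := exist _ x (inS x (gen_base Sx)).
pose tH := sub H (Or31 _ _ erefl); pose tF := sub F (Or32 _ _ erefl).
pose tE := sub E (Or33 _ _ erefl).
have [[r1 r2 r3] univ] := hU.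
have rel : sl2_rel tH tF tE by split; apply: val_inj.
have [f [[fD fM f1 fZ] fH fF fE _]] := univ _ _ _ _ rel.
have hvalf : alg_hom (fun x => val (f x)).
  by split=> [x y|x y||c x]; rewrite ?fD ?fM ?f1 ?fZ ?rmorphD ?rmorphM ?rmorph1.
have <- : val (f u) = u.
  by apply: (Usl2_hom_eq hvalf alg_hom_id); rewrite ?fH ?fF ?fE.
exact/in_genP/(valP (f u)).
Qed.

Lemma Usl2_ind (P : U -> Prop) :
  P 1 -> (forall x y, P x -> P y -> P (x + y)) ->
  (forall x y, P x -> P y -> P (x * y)) -> (forall c x, P x -> P (c *: x)) ->
  P H -> P F -> P E -> forall u, P u.
Proof.
move=> P1 PD PM PZ PH PF PE u.
by elim: (Usl2_gen u) => [x [] ->||x y _ Px _ Py|x y _ Px _ Py|c x _ Px]; auto.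
Qed.

Lemma brHE : br H E = E *+ 2. Proof. by case: hU => -[]. Qed.
Lemma brHF : br H F = - (F *+ 2). Proof. by case: hU => -[]. Qed.
Lemma brEF : br E F = H. Proof. by case: hU => -[]. Qed.

End UniversalProperty.

(** * Weights in the adjoint representation of U(sl2) *)

Section IteratedBracket.
Variables (k : fieldType) (R : algType k) (a : R).

Lemma iter_brDr n x y : iter n (br a) (x + y) = iter n (br a) x + iter n (br a) y.
Proof. by elim: n => //= n ->; rewrite brDr. Qed.

Lemma iter_br0r n : iter n (br a) 0 = 0.
Proof. by elim: n => //= n ->; rewrite br0r. Qed.

Lemma iter_brZr n (c : k) x : iter n (br a) (c *: x) = c *: iter n (br a) x.
Proof. by elim: n => //= n ->; rewrite brZr. Qed.

Lemma iter_brM_eq0 m n x y :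
  iter m (br a) x = 0 -> iter n (br a) y = 0 -> iter (m + n) (br a) (x * y) = 0.
Proof.
elim: m n x y => [|m IHm] n x y xm0 yn0; first by rewrite /= in xm0; rewrite xm0 mul0r iter_br0r.
elim: n y yn0 => [|n IHn] y yn0; first by rewrite /= in yn0; rewrite yn0 mulr0 iter_br0r.
rewrite addSn iterSr brMr iter_brDr IHm -?iterSr // add0r -addSnnS.
by rewrite IHn // -iterSr.
Qed.

End IteratedBracket.

Section LowestWeight.
Variables (k : fieldType) (U : algType k) (H F E : U).
Hypothesis hU : is_Usl2 H F E.
Hypothesis char0 : [pchar k] =i pred0.

Lemma adE_nilpotent u : exists n, iter n (br E) u = 0.
Proof.
have adEE : br E E = 0 by rewrite /br subrr.
have adEH : br E H = - (E *+ 2) by rewrite br_anti (brHE hU).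
have adE2H : br E (br E H) = 0 by rewrite adEH brNr brMnr adEE mul0rn oppr0.
move: u; apply: (Usl2_ind hU (P := fun u => exists n, iter n (br E) u = 0))
  => [|x y [m xm] [n yn]|x y [m xm] [n yn]|c x [m xm]|||].
- by exists 1%N; rewrite /= /br mulr1 mul1r subrr.
- by exists (m + n)%N; rewrite iter_brDr {1}addnC !iterD xm yn !iter_br0r addr0.
- by exists (m + n)%N; apply: iter_brM_eq0.
- by exists m; rewrite iter_brZr xm scaler0.
- by exists 2%N.
- by exists 3%N; rewrite /= (brEF hU).
- by exists 1%N.
Qed.

(* In the adjoint representation, [iter j (ad E) z] has [ad H]-weight [2j + 2] and
   [ad F] lowers it with the nonzero factor [-(j+1)(j+2)]; as [ad E] is nilpotent,
   descending from a vanishing [iter n (ad E) z] forces [z = 0]. *)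
Lemma lowest_weight2_eq0 z : br H z = z *+ 2 -> br F z = 0 -> z = 0.
Proof.
move=> Hz Fz; pose v j := iter j (br E) z.
have vS j : v j.+1 = br E (v j) by [].
have brH_adE x : br H (br E x) = br E (br H x) + br E x *+ 2.
  by rewrite br_jacobi (brHE hU) brMnl.
have brF_adE x : br F (br E x) = br E (br F x) - br H x.
  by rewrite br_jacobi (br_anti F E) (brEF hU) brNl.
have Hv j : br H (v j) = v j *+ (2 * j + 2).
  elim: j => [|j IHj] //; rewrite vS brH_adE IHj brMnr -mulrnDr.
  by congr (_ *+ _); lia.
have Fv j : br F (v j.+1) = - (v j *+ (j.+1 * j.+2)).
  elim: j => [|j IHj]; first by rewrite vS brF_adE Fz br0r sub0r Hz.
  rewrite [v j.+2]vS brF_adE IHj brNr brMnr Hv -opprD -mulrnDr.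
  by congr (- (_ *+ _)); lia.
have [n vn0] := adE_nilpotent z.
suff vanish i : v (n - i)%N = 0 by move: (vanish n); rewrite subnn.
elim: i => [|i IHi]; first by rewrite subn0.
have [lt_in|le_ni] := ltnP i n; last by have -> : (n - i.+1 = n - i)%N by lia.
have eSn : (n - i = (n - i.+1).+1)%N by lia.
move: (Fv (n - i.+1)%N); rewrite -eSn IHi br0r => /esym /eqP; rewrite oppr_eq0 => /eqP.
by move=> h; apply: (char0_mulrn_eq0 char0 _ h); rewrite muln_gt0 subn_gt0 lt_in.
Qed.

End LowestWeight.

Section WeightDecomposition.
Variables (k : fieldType) (U : algType k) (H F E : U).
Hypothesis hU : is_Usl2 H F E.
Hypothesis char0 : [pchar k] =i pred0.

Let r1 := brHE hU.
Let r2 := brHF hU.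
Let r3 := brEF hU.

Definition weight0 := gen_alg (fun x => x = H \/ x = E * F).

Lemma weight0H : weight0 H. Proof. by apply: gen_base; left. Qed.
Lemma weight0EF : weight0 (E * F). Proof. by apply: gen_base; right. Qed.

Lemma weight0_comm x y : weight0 x -> weight0 y -> x * y = y * x.
Proof.
have brH_EF : br H (E * F) = 0 by rewrite brMr r1 r2 mulrN mulrnAl mulrnAr subrr.
apply: gen_comm => a b [->|->] [->|->] //; apply/eqP; rewrite -br_eq0 //.
  by rewrite brH_EF.
by rewrite br_anti brH_EF oppr0.
Qed.

Lemma brH_weight0 q : weight0 q -> br H q = 0.
Proof. by move=> wq; rewrite /br (weight0_comm weight0H wq) subrr. Qed.

Lemma mulHE : H * E = E * (H + 2%:R).
Proof. by rewrite mulrDr mulr_natr -r1 /br addrC subrK. Qed.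
Lemma mulFE : F * E = E * F - H.
Proof. by rewrite -r3 /br opprB addrC subrK. Qed.
Lemma mulHF : H * F = F * (H - 2%:R).
Proof. by rewrite mulrBr mulr_natr -r2 /br addrC subrK. Qed.
Lemma mulEFF : E * F * F = F * (E * F + H - 2%:R).
Proof.
have eEF : E * F = F * E + H by rewrite -r3 /br addrC subrK.
by rewrite {1}eEF mulrDl mulHF -addrA [RHS]mulrDr mulrA.
Qed.

Lemma weight0_swapE n q : weight0 q -> exists2 q', weight0 q' & q * E ^+ n = E ^+ n * q'.
Proof.
apply: gen_mul_swapX => _ [->|->].
- by exists (H + 2%:R); [apply: genD; [exact: weight0H | exact: gen_natr] | exact: mulHE].
- exists (E * F - H); first by apply: genB; [exact: weight0EF | exact: weight0H].
  by rewrite -mulrA mulFE.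
Qed.

Lemma weight0_swapF n q : weight0 q -> exists2 q', weight0 q' & q * F ^+ n = F ^+ n * q'.
Proof.
apply: gen_mul_swapX => _ [->|->].
- by exists (H - 2%:R); [apply: genB; [exact: weight0H | exact: gen_natr] | exact: mulHF].
- exists (E * F + H - 2%:R); last exact: mulEFF.
  by apply: genB; [apply: genD; [exact: weight0EF | exact: weight0H] | exact: gen_natr].
Qed.

(* [E^w q] or [F^(-w) q] with [q] in [weight0]: an [ad H]-eigenvector of eigenvalue [2w]. *)
Definition weight_block (w : int) (x : U) : Prop :=
  exists n q, weight0 q /\
    ((w = n%:Z /\ x = E ^+ n * q) \/ (w = - n%:Z /\ x = F ^+ n * q)).

Lemma weight_blockMr w x q : weight_block w x -> weight0 q -> weight_block w (x * q).
Proof.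
move=> [n [q0 [wq0 [[-> ->]|[-> ->]]]]] wq; exists n, (q0 * q).
  by split; [exact: genM | left; rewrite mulrA].
by split; [exact: genM | right; rewrite mulrA].
Qed.

Lemma weight0_block q : weight0 q -> weight_block 0 q.
Proof. by move=> wq; exists 0%N, q; split => //; left; rewrite expr0 mul1r. Qed.

Lemma weight_blockE (n : nat) : weight_block n (E ^+ n).
Proof. by exists n, 1; split; [exact: gen1 | left; rewrite mulr1]. Qed.

Lemma weight_blockF (n : nat) : weight_block (- n%:Z) (F ^+ n).
Proof. by exists n, 1; split; [exact: gen1 | right; rewrite mulr1]. Qed.

Lemma weight_block_EF a b : weight_block (a%:Z - b%:Z) (E ^+ a * F ^+ b).
Proof.
elim: a b => [|a IHa] b; first by rewrite expr0 mul1r sub0r; exact: weight_blockF.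
case: b => [|b]; first by rewrite expr0 mulr1 subr0; exact: weight_blockE.
have [q wq eq] := weight0_swapF b weight0EF.
have -> : E ^+ a.+1 * F ^+ b.+1 = E ^+ a * F ^+ b * q.
  by rewrite exprSr exprS -mulrA (mulrA E) eq !mulrA.
have -> : a.+1%:Z - b.+1%:Z = a%:Z - b%:Z by lia.
exact: weight_blockMr.
Qed.

Lemma weight_block_FE a b : weight_block (b%:Z - a%:Z) (F ^+ a * E ^+ b).
Proof.
elim: a b => [|a IHa] b; first by rewrite expr0 mul1r subr0; exact: weight_blockE.
case: b => [|b]; first by rewrite expr0 mulr1 sub0r; exact: weight_blockF.
have [q wq eq] := weight0_swapE b (genB weight0EF weight0H).
have -> : F ^+ a.+1 * E ^+ b.+1 = F ^+ a * E ^+ b * q.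
  by rewrite exprSr exprS -mulrA (mulrA F) mulFE eq !mulrA.
have -> : b.+1%:Z - a.+1%:Z = b%:Z - a%:Z by lia.
exact: weight_blockMr.
Qed.

Lemma weight_blockM w w' x y :
  weight_block w x -> weight_block w' y -> weight_block (w + w') (x * y).
Proof.
move=> [a [q [wq [[-> ->]|[-> ->]]]]] [b [q' [wq' [[-> ->]|[-> ->]]]]].
- have [q2 wq2 eq] := weight0_swapE b wq.
  exists (a + b)%N, (q2 * q'); split; first exact: genM.
  by left; split; [lia | rewrite -mulrA (mulrA q) eq exprD !mulrA].
- have [q2 wq2 eq] := weight0_swapF b wq.
  rewrite -mulrA (mulrA q) eq !mulrA -mulrA.
  apply: weight_blockMr; last exact: genM.
  exact: weight_block_EF.
- have [q2 wq2 eq] := weight0_swapE b wq.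
  rewrite -mulrA (mulrA q) eq !mulrA -mulrA.
  apply: weight_blockMr; last exact: genM.
  by rewrite addrC; exact: weight_block_FE.
- have [q2 wq2 eq] := weight0_swapF b wq.
  exists (a + b)%N, (q2 * q'); split; first exact: genM.
  by right; split; [lia | rewrite -mulrA (mulrA q) eq exprD !mulrA].
Qed.

Lemma weight_blockZ w (c : k) x : weight_block w x -> weight_block w (c *: x).
Proof.
move=> [n [q [wq [[-> ->]|[-> ->]]]]]; exists n, (c *: q); split; try exact: genZ.
  by left; rewrite scalerAr.
by right; rewrite scalerAr.
Qed.

Lemma weight_block0 w : weight_block w 0.
Proof.
case: w => n.
  by exists n, 0; split; [exact: gen0 | left; rewrite mulr0].
by exists n.+1, 0; split; [exact: gen0 | right; rewrite mulr0 NegzE].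
Qed.

Lemma weight_blockD w x y : weight_block w x -> weight_block w y -> weight_block w (x + y).
Proof.
move=> [a [q [wq hx]]] [b [q' [wq' hy]]].
have wqq' := genD wq wq'.
case: hx => -[wa ->]; case: hy => -[wb ->]; subst w.
- have <- : a = b by lia.
  by exists a, (q + q'); split => //; left; rewrite mulrDr.
- have [-> ->] : a = 0%N /\ b = 0%N by lia.
  by exists 0%N, (q + q'); split => //; left; rewrite !expr0 !mul1r.
- have [-> ->] : a = 0%N /\ b = 0%N by lia.
  by exists 0%N, (q + q'); split => //; left; rewrite !expr0 !mul1r.
- have <- : a = b by lia.
  by exists a, (q + q'); split => //; right; rewrite mulrDr.
Qed.

Inductive block_sum : seq int -> U -> Prop :=
| block_sum_nil : block_sum [::] 0
| block_sum_cons w ws x u :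
    weight_block w x -> block_sum ws u -> block_sum (w :: ws) (x + u).

Lemma block_sum_cat ws ws' u u' :
  block_sum ws u -> block_sum ws' u' -> block_sum (ws ++ ws') (u + u').
Proof.
elim=> [|w ws0 x u0 wx _ IH] h'; first by rewrite add0r.
by rewrite -addrA; apply: block_sum_cons => //; apply: IH.
Qed.

Lemma block_sum_mull w x ws u :
  weight_block w x -> block_sum ws u -> exists ws', block_sum ws' (x * u).
Proof.
move=> wx; elim=> [|w' ws0 y u0 wy _ [ws' IH]].
  by exists [::]; rewrite mulr0; exact: block_sum_nil.
exists ((w + w') :: ws'); rewrite mulrDr.
by apply: block_sum_cons => //; apply: weight_blockM.
Qed.

Lemma block_sum1 w x : weight_block w x -> block_sum [:: w] x.
Proof. by move=> wx; rewrite -[x]addr0; apply: block_sum_cons => //; exact: block_sum_nil. Qed.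

Lemma Usl2_block_sum u : exists ws, block_sum ws u.
Proof.
move: u; apply: (Usl2_ind hU (P := fun u => exists ws, block_sum ws u))
  => [|x y [ws x_ws] [ws' y_ws']|x y [ws x_ws] [ws' y_ws]|c x [ws x_ws]|||].
- by exists [:: 0]; apply/block_sum1/weight0_block/gen1.
- by exists (ws ++ ws'); apply: block_sum_cat.
- elim: x_ws => [|w ws0 z u0 wz _ [zs IH]].
    by exists [::]; rewrite mul0r; exact: block_sum_nil.
  have [zs' h'] := block_sum_mull wz y_ws.
  by exists (zs' ++ zs); rewrite mulrDl; apply: block_sum_cat.
- exists ws; elim: x_ws => [|w ws0 z u0 wz _ IH].
    by rewrite scaler0; exact: block_sum_nil.
  by rewrite scalerDr; apply: block_sum_cons => //; apply: weight_blockZ.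
- by exists [:: 0]; apply/block_sum1/weight0_block/weight0H.
- by exists [:: -1]; apply/block_sum1; rewrite -[F]expr1; exact: weight_blockF.
- by exists [:: 1]; apply/block_sum1; rewrite -[E]expr1; exact: weight_blockE.
Qed.

Lemma brH_expE n : br H (E ^+ n) = E ^+ n *+ (2 * n).
Proof.
elim: n => [|n IHn]; first by rewrite expr0 /br mulr1 mul1r subrr.
rewrite exprSr brMr IHn r1 mulrnAl mulrnAr -mulrnDr; congr (_ *+ _); lia.
Qed.

Lemma brH_expF n : br H (F ^+ n) = - (F ^+ n *+ (2 * n)).
Proof.
elim: n => [|n IHn]; first by rewrite expr0 /br mulr1 mul1r subrr oppr0.
rewrite exprSr brMr IHn r2 mulNr mulrN mulrnAl mulrnAr -opprD -mulrnDr.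
by congr (- (_ *+ _)); lia.
Qed.

Lemma weight_block_brH w x : weight_block w x -> br H x = (2 * w)%:~R *: x.
Proof.
move=> [n [q [wq [[-> ->]|[-> ->]]]]]; rewrite brMr (brH_weight0 wq) mulr0 addr0.
  by rewrite brH_expE -scaler_nat -scalerAl intrM natrM.
by rewrite brH_expF -scaler_nat mulNr -scalerAl -scaleNr mulrN intrN intrM natrM.
Qed.

Fixpoint weight_filter (ws : seq int) (x : U) : U :=
  if ws is w :: ws' then br H (weight_filter ws' x) - (2 * w)%:~R *: weight_filter ws' x
  else x.

Fixpoint filter_coef (ws : seq int) (c : k) : k :=
  if ws is w :: ws' then (c - (2 * w)%:~R) * filter_coef ws' c else 1.

Lemma weight_filterD ws x y : weight_filter ws (x + y) = weight_filter ws x + weight_filter ws y.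
Proof. by elim: ws => //= w ws ->; rewrite brDr scalerDr opprD addrACA. Qed.

Lemma weight_filter_eigen ws c x : br H x = c *: x -> weight_filter ws x = filter_coef ws c *: x.
Proof.
move=> Hx; elim: ws => [|w ws IH] /=; first by rewrite scale1r.
by rewrite IH brZr Hx !scalerA -scalerBl mulrBl mulrC.
Qed.

Lemma weight_filter_block_sum ws u : block_sum ws u -> weight_filter ws u = 0.
Proof.
elim=> [|w ws0 x u0 wx _ IH] //=; rewrite !weight_filterD IH !addr0.
rewrite (weight_filter_eigen ws0 (weight_block_brH wx)) brZr (weight_block_brH wx).
by rewrite !scalerA mulrC subrr.
Qed.

Lemma block_sum_split w0 ws u : block_sum ws u -> exists y z zs,
  [/\ u = y + z, weight_block w0 y, block_sum zs z & all (fun w => w != w0) zs].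
Proof.
elim=> [|w ws0 x u0 wx _ [y [z [zs [-> wy zs_z zs_w0]]]]].
  by exists 0, 0, [::]; split; [rewrite addr0 | exact: weight_block0 | exact: block_sum_nil |].
have [ew|w_w0] := eqVneq w w0.
  by subst w0; exists (x + y), z, zs; split => //; [rewrite addrA | exact: weight_blockD].
exists y, (x + z), (w :: zs); split => //=; [by rewrite addrCA | exact: block_sum_cons |].
by rewrite w_w0.
Qed.

Lemma filter_coef_neq0 w0 zs : all (fun w => w != w0) zs -> filter_coef zs (2 * w0)%:~R != 0.
Proof.
elim: zs => [|w zs IH] /=; first by rewrite oner_eq0.
case/andP=> w_w0 zs_w0; rewrite mulf_neq0 ?IH // -intrB; apply: (char0_intr_neq0 char0).
by apply/eqP => h; move/eqP: w_w0; apply; lia.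
Qed.

(* Write [x = y + z] with [y] the block of index [-1] and [z] a sum of blocks of
   other indices: [weight_filter] for those indices kills [z], but only rescales the
   [ad H]-eigenvector [z = x - y] by a nonzero factor. *)
Lemma weightN2_factorF x : br H x = - (x *+ 2) -> exists2 q, weight0 q & x = F * q.
Proof.
move=> Hx; have [ws x_ws] := Usl2_block_sum x.
have [y [z [zs [exyz wy zs_z zs_w]]]] := block_sum_split (-1) x_ws.
have Hz : br H z = (2 * -1)%:~R *: z.
  have -> : z = x - y by rewrite exyz addrC addKr.
  have -> : ((2 * -1 : int)%:~R : k) = - 2%:R by rewrite mulrN1 intrN.
  by rewrite brBr Hx (weight_block_brH wy) scalerBr !scaleNr !scaler_nat.
have z0 : z = 0.
  move: (weight_filter_block_sum zs_z); rewrite (weight_filter_eigen zs Hz) => /eqP.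
  by rewrite scaler_eq0 (negbTE (filter_coef_neq0 zs_w)) => /eqP.
move: wy => [n [q [wq [[en _]|[en ey]]]]]; first by lia.
have n1 : n = 1%N by lia.
by exists q; rewrite // exyz z0 addr0 ey n1 expr1.
Qed.

End WeightDecomposition.

(** * Formal power series *)

Section PowerSeries.
Variables (k : fieldType) (U : algType k).
Local Notation series := (nat -> U).
Implicit Types (u v : U) (x y f : series).

Definition ser0 : series := fun _ => 0.
Definition ser_opp x : series := fun n => - x n.
Definition ser_tail x : series := fun n => x n.+1.
Definition ser_hmul x : series := fun n => if n is m.+1 then x m else 0.

Lemma ser_eqP x y : x =1 y -> x = y.
Proof. exact: functional_extensionality. Qed.

Lemma ser_act_h x : ser_act (ps_h k) x = ser_hmul x.
Proof.
apply: ser_eqP => -[|n]; rewrite /ser_act ?big_ord1 ?scale0r //.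
rewrite big_ord_recl scale0r add0r big_ord_recl /= scale1r subn1 big1 ?addr0 //.
by move=> i _; rewrite /ps_h /= scale0r.
Qed.

Lemma ser_decomp f : f = ser_add (ser_cst (f 0%N)) (ser_hmul (ser_tail f)).
Proof. by apply: ser_eqP => -[|n]; rewrite /ser_add /= ?addr0 ?add0r. Qed.

Lemma ser_cst0 : ser_cst 0 = ser0.
Proof. by apply: ser_eqP => -[|n]. Qed.

Lemma ser_add0l x : ser_add ser0 x = x.
Proof. by apply: ser_eqP => n; rewrite /ser_add add0r. Qed.

Lemma ser_addA x y f : ser_add x (ser_add y f) = ser_add (ser_add x y) f.
Proof. by apply: ser_eqP => n; rewrite /ser_add addrA. Qed.

Lemma ser_addN x : ser_add x (ser_opp x) = ser0.
Proof. by apply: ser_eqP => n; rewrite /ser_add subrr. Qed.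

Lemma ser_cstD u v : ser_cst (u + v) = ser_add (ser_cst u) (ser_cst v).
Proof. by apply: ser_eqP => -[|n]; rewrite /ser_add //= addr0. Qed.

Lemma ser_hmulD x y : ser_hmul (ser_add x y) = ser_add (ser_hmul x) (ser_hmul y).
Proof. by apply: ser_eqP => -[|n]; rewrite /ser_add //= addr0. Qed.

Lemma ser_act_cst (c : k) x n : ser_act (ps_cst c) x n = c *: x n.
Proof.
rewrite /ser_act big_ord_recl /= subn0 big1 ?addr0 //.
by move=> i _; rewrite /= scale0r.
Qed.

Lemma ser_act_decomp (s : nat -> k) x :
  ser_act s x = ser_add (ser_act (ps_cst (s 0%N)) x) (ser_hmul (ser_act (fun n => s n.+1) x)).
Proof.
apply: ser_eqP => -[|n]; rewrite /ser_add ser_act_cst /=.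
  by rewrite /ser_act big_ord1 addr0.
by rewrite /ser_act big_ord_recl.
Qed.

Lemma ser_mul0 x y : ser_mul x y 0 = x 0%N * y 0%N.
Proof. by rewrite /ser_mul big_ord1. Qed.

Lemma ser_mul_cstl u y n : ser_mul (ser_cst u) y n = u * y n.
Proof.
rewrite /ser_mul big_ord_recl /= subn0 big1 ?addr0 //.
by move=> i _; rewrite /= mul0r.
Qed.

Lemma ser_mul_cstr y u n : ser_mul y (ser_cst u) n = y n * u.
Proof.
rewrite /ser_mul big_ord_recr /= subnn big1 ?add0r //.
move=> i _; have : (0 < n - i)%N by rewrite subn_gt0.
by case: (n - i)%N => [|m] //= _; rewrite mulr0.
Qed.

Lemma ser_mul_cst u v : ser_mul (ser_cst u) (ser_cst v) = ser_cst (u * v).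
Proof. by apply: ser_eqP => -[|n]; rewrite ser_mul_cstl //= mulr0. Qed.

Lemma ser_mulDl x y f : ser_mul (ser_add x y) f = ser_add (ser_mul x f) (ser_mul y f).
Proof.
by apply: ser_eqP => n; rewrite /ser_mul /ser_add -big_split; apply: eq_bigr => i _; rewrite mulrDl.
Qed.

Lemma ser_mulDr x y f : ser_mul f (ser_add x y) = ser_add (ser_mul f x) (ser_mul f y).
Proof.
by apply: ser_eqP => n; rewrite /ser_mul /ser_add -big_split; apply: eq_bigr => i _; rewrite mulrDr.
Qed.

Lemma ser_mul_hmull x y : ser_mul (ser_hmul x) y = ser_hmul (ser_mul x y).
Proof.
apply: ser_eqP => -[|n]; first by rewrite ser_mul0 mul0r.
by rewrite /ser_mul big_ord_recl mul0r add0r.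
Qed.

Lemma ser_mul_hmulr x y : ser_mul x (ser_hmul y) = ser_hmul (ser_mul x y).
Proof.
apply: ser_eqP => -[|n]; first by rewrite ser_mul0 mulr0.
rewrite /ser_mul big_ord_recr /= subnn mulr0 addr0.
by apply: eq_bigr => i _; rewrite /= subSn // -ltnS.
Qed.

(* [L] is the identity on leading coefficients and compatible with the [h]-adic
   filtration; its inverse is built coefficient by coefficient. *)
Lemma triangular_bijective (L : series -> series) (P : U -> series) :
  (forall f, L f = ser_add (P (f 0%N)) (ser_hmul (L (ser_tail f)))) ->
  (forall u, P u 0%N = u) -> bijective L.
Proof.
move=> Lrec P0.
have L0 f : L f 0%N = f 0%N by rewrite Lrec /ser_add addr0 P0.
have LS f n : L f n.+1 = P (f 0%N) n.+1 + L (ser_tail f) n by rewrite {1}Lrec.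
have L_inj n f f' : L f = L f' -> f n = f' n.
  elim: n f f' => [|n IHn] f f' eL; first by rewrite -L0 eL L0.
  have e0 : f 0%N = f' 0%N by rewrite -L0 eL L0.
  apply: (IHn (ser_tail f) (ser_tail f')); apply: ser_eqP => m.
  by apply: (@addrI _ (P (f 0%N) m.+1)); rewrite -LS eL LS e0.
pose T t : series := fun n => t n.+1 - P (t 0%N) n.+1.
pose Linv t : series := fun n => iter n T t 0%N.
have Linv_tail t : ser_tail (Linv t) = Linv (T t).
  by apply: ser_eqP => n; rewrite /ser_tail /Linv iterSr.
have LK t : L (Linv t) = t.
  apply: ser_eqP => n; elim: n t => [|n IHn] t; first by rewrite L0.
  by rewrite LS Linv_tail IHn /T /Linv /= addrC subrK.
by exists Linv => // x; apply: ser_eqP => n; apply: L_inj; exact: LK.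
Qed.

Lemma ser_mul_bijective x : x 0%N = 1 -> bijective (ser_mul x).
Proof.
move=> x0; apply: (@triangular_bijective _ (fun u => ser_mul x (ser_cst u))) => [f|u].
  by rewrite {1}(ser_decomp f) ser_mulDr ser_mul_hmulr.
by rewrite ser_mul0 x0 mul1r.
Qed.

End PowerSeries.

Lemma ps_mul_cst (k : fieldType) (c d : k) : ps_mul (ps_cst c) (ps_cst d) = ps_cst (c * d).
Proof.
apply: functional_extensionality => n; rewrite /ps_mul big_ord_recl /= subn0.
rewrite big1 ?addr0; last by move=> i _; rewrite /= mul0r.
by case: n => [|n] /=; rewrite ?mulr0.
Qed.

Lemma ps_add_cst (k : fieldType) (c d : k) : ps_add (ps_cst c) (ps_cst d) = ps_cst (c + d).
Proof. by apply: functional_extensionality => -[|n] //=; rewrite /ps_add /= addr0. Qed.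

Section KhAlgebra.
Variables (k : fieldType) (A : nzRingType) (act : (nat -> k) -> A -> A).
Hypothesis hk : kh_algebra act.

Lemma actD s : {morph act s : a b / a + b}.
Proof. by case: hk. Qed.
Lemma actDl s t a : act (ps_add s t) a = act s a + act t a.
Proof. by case: hk. Qed.
Lemma actA s t a : act (ps_mul s t) a = act s (act t a).
Proof. by case: hk. Qed.
Lemma act1 a : act (ps_one k) a = a.
Proof. by case: hk. Qed.
Lemma actMl s a b : act s (a * b) = act s a * b.
Proof. by case: hk => _ _ _ _ /(_ s a b) []. Qed.
Lemma actMr s a b : act s (a * b) = a * act s b.
Proof. by case: hk => _ _ _ _ /(_ s a b) []. Qed.

Lemma act0 s : act s 0 = 0.
Proof. by apply: (@addrI _ (act s 0)); rewrite -actD !addr0. Qed.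

Lemma in_hAD a b : in_hA act a -> in_hA act b -> in_hA act (a + b).
Proof. by move=> [x ->] [y ->]; exists (x + y); rewrite actD. Qed.

Lemma in_hAN a : in_hA act a -> in_hA act (- a).
Proof.
move=> [x ->]; exists (- x); apply: (@addrI _ (act (ps_h k) x)).
by rewrite -actD !subrr act0.
Qed.

Lemma in_hA_sym a b : in_hA act (a - b) -> in_hA act (b - a).
Proof. by move/in_hAN; rewrite opprB. Qed.

Lemma in_hA_trans b a c : in_hA act (a - b) -> in_hA act (b - c) -> in_hA act (a - c).
Proof. by move=> hab hbc; have := in_hAD hab hbc; rewrite addrA subrK. Qed.

End KhAlgebra.

(* [A] as a [k]-algebra, [k] acting through the constant series. *)
Definition res_alg (k : fieldType) (A : nzRingType) (act : (nat -> k) -> A -> A)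
  (hk : kh_algebra act) : Type := A.

Section ResAlg.
Variables (k : fieldType) (A : nzRingType) (act : (nat -> k) -> A -> A).
Variable hk : kh_algebra act.

HB.instance Definition _ := GRing.NzRing.on (res_alg hk).

Definition res_scale (c : k) (a : res_alg hk) : res_alg hk := act (ps_cst c) a.

Lemma res_scalerA c d a : res_scale c (res_scale d a) = res_scale (c * d) a.
Proof. by rewrite /res_scale -(actA hk) ps_mul_cst. Qed.
Lemma res_scale1r : left_id 1 res_scale.
Proof. exact: act1 hk. Qed.
Lemma res_scalerDr : right_distributive res_scale +%R.
Proof. by move=> c; apply: actD. Qed.
Lemma res_scalerDl a : {morph res_scale^~ a : c d / c + d}.
Proof. by move=> c d; rewrite /res_scale -ps_add_cst (actDl hk). Qed.

HB.instance Definition _ := GRing.Zmodule_isLmodule.Build k (res_alg hk)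
  res_scalerA res_scale1r res_scalerDr res_scalerDl.

Lemma res_scalerAl (c : k) (a b : res_alg hk) : c *: (a * b) = (c *: a) * b.
Proof. exact: actMl. Qed.
HB.instance Definition _ := GRing.Lmodule_isLalgebra.Build k (res_alg hk) res_scalerAl.

Lemma res_scalerAr (c : k) (a b : res_alg hk) : c *: (a * b) = a * (c *: b).
Proof. exact: actMr. Qed.
HB.instance Definition _ := GRing.Lalgebra_isAlgebra.Build k (res_alg hk) res_scalerAr.

End ResAlg.

Section Transport.
Variables (k : fieldType) (U : algType k) (A : nzRingType) (act : (nat -> k) -> A -> A).
Hypothesis hk : kh_algebra act.
Variable g : (nat -> U) -> A.
Hypothesis hg : kh_alg_iso act g.
Implicit Types (x y : nat -> U) (u v : U).

Lemma g_inj : injective g. Proof. by case: hg => /bij_inj. Qed.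
Lemma gD x y : g (ser_add x y) = g x + g y. Proof. by case: hg. Qed.
Lemma gM x y : g (ser_mul x y) = g x * g y. Proof. by case: hg. Qed.
Lemma g1 : g (ser_cst 1) = 1. Proof. by case: hg. Qed.
Lemma g_act s x : g (ser_act s x) = act s (g x). Proof. by case: hg. Qed.

Lemma g_ser0 : g (ser0 U) = 0.
Proof. by apply: (@addrI _ (g (ser0 U))); rewrite -gD ser_add0l addr0. Qed.

Lemma g_opp x : g (ser_opp x) = - g x.
Proof. by apply: (@addrI _ (g x)); rewrite -gD ser_addN g_ser0 subrr. Qed.

Lemma g_muln x n : g x *+ n = g (fun m => x m *+ n).
Proof.
elim: n => [|n IHn].
  by rewrite mulr0n -g_ser0; congr g; apply: ser_eqP => m; rewrite mulr0n.
by rewrite mulrSr IHn -gD; congr g; apply: ser_eqP => m; rewrite /ser_add mulrSr.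
Qed.

Lemma g_hmul x : g (ser_hmul x) = act (ps_h k) (g x).
Proof. by rewrite -ser_act_h g_act. Qed.

Lemma in_hA_g x : in_hA act (g x) <-> x 0%N = 0.
Proof.
have [ginv gK Kg] : bijective g by case: hg.
split=> [[a ea]|x0].
  by move: ea; rewrite -(Kg a) -g_hmul => /g_inj ->.
exists (g (ser_tail x)); rewrite -g_hmul; congr g.
by rewrite {1}(ser_decomp x) x0 ser_cst0 ser_add0l.
Qed.

Definition g_cst u : res_alg hk := g (ser_cst u).

Lemma g_cstM u v : g (ser_cst (u * v)) = g (ser_cst u) * g (ser_cst v).
Proof. by rewrite -ser_mul_cst gM. Qed.

Lemma g_cst_alg_hom : alg_hom g_cst.
Proof.
split=> [u v|u v||c u]; rewrite /g_cst.
- by rewrite ser_cstD gD.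
- exact: g_cstM.
- exact: g1.
- transitivity (act (ps_cst c) (g (ser_cst u))); last by [].
  rewrite -g_act; congr g; apply: ser_eqP => n.
  by rewrite ser_act_cst; case: n => [|n] //=; rewrite scaler0.
Qed.

Lemma g_cst_br u v : g (ser_cst (br u v)) = br (g (ser_cst u)) (g (ser_cst v)).
Proof. exact: (alg_hom_br g_cst_alg_hom). Qed.

Lemma g_cstMn u n : g (ser_cst (u *+ n)) = g (ser_cst u) *+ n.
Proof. exact: (alg_homMn g_cst_alg_hom). Qed.

Lemma br_g_cst u x : br (g (ser_cst u)) (g x) = g (fun n => br u (x n)).
Proof.
have -> : (fun n => br u (x n)) =
    ser_add (ser_mul (ser_cst u) x) (ser_opp (ser_mul x (ser_cst u))).
  by apply: ser_eqP => n; rewrite /ser_add /ser_opp ser_mul_cstl ser_mul_cstr.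
by rewrite gD g_opp !gM.
Qed.

Lemma br_g_cst_coef u x y : br (g (ser_cst u)) (g x) = g y -> forall m, br u (x m) = y m.
Proof. by rewrite br_g_cst => /g_inj <-. Qed.

End Transport.

Section HadicExtension.
Variables (k : fieldType) (U : algType k) (p : U -> nat -> U).
Hypothesis pD : forall u v, p (u + v) = ser_add (p u) (p v).
Hypothesis pM : forall u v, p (u * v) = ser_mul (p u) (p v).
Hypothesis pZ : forall (c : k) u, p (c *: u) = ser_act (ps_cst c) (p u).
Hypothesis p_const : forall u, p u 0%N = u.
Implicit Types (f x : nat -> U) (u : U).

(* The [k[[h]]]-linear extension [f = \sum_m f_m h^m |-> \sum_m p(f_m) h^m]. *)
Definition hadic_ext f : nat -> U := fun n => \sum_(m < n.+1) p (f m) (n - m)%N.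

Lemma p0 : p 0 = ser0 U.
Proof.
apply: ser_eqP => n; apply: (@addrI _ (p 0 n)).
by rewrite -[p 0 n + _]/(ser_add (p 0) (p 0) n) -pD !addr0.
Qed.

Lemma hadic_ext_rec f :
  hadic_ext f = ser_add (p (f 0%N)) (ser_hmul (hadic_ext (ser_tail f))).
Proof.
by apply: ser_eqP => -[|n]; rewrite /ser_add /hadic_ext ?big_ord1 ?addr0 // big_ord_recl.
Qed.

Lemma hadic_ext_bijective : bijective hadic_ext.
Proof. exact: (triangular_bijective hadic_ext_rec p_const). Qed.

Lemma hadic_extD f f' : hadic_ext (ser_add f f') = ser_add (hadic_ext f) (hadic_ext f').
Proof.
apply: ser_eqP => n; rewrite /hadic_ext /ser_add -big_split.
by apply: eq_bigr => i _; rewrite pD.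
Qed.

Lemma hadic_ext_cst u : hadic_ext (ser_cst u) = p u.
Proof.
apply: ser_eqP => n; rewrite /hadic_ext big_ord_recl subn0 big1 ?addr0 //.
by move=> i _; rewrite /= p0.
Qed.

Lemma hadic_ext_hmul x : hadic_ext (ser_hmul x) = ser_hmul (hadic_ext x).
Proof. by rewrite hadic_ext_rec /= p0 ser_add0l. Qed.

Lemma hadic_ext_scale (c : k) x :
  hadic_ext (ser_act (ps_cst c) x) = ser_act (ps_cst c) (hadic_ext x).
Proof.
apply: ser_eqP => n; rewrite ser_act_cst /hadic_ext scaler_sumr.
by apply: eq_bigr => i _; rewrite ser_act_cst pZ ser_act_cst.
Qed.

Lemma hadic_ext_act s f : hadic_ext (ser_act s f) = ser_act s (hadic_ext f).
Proof.
apply: ser_eqP => n; elim: n s f => [|n IHn] s f;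
  rewrite !(ser_act_decomp s) hadic_extD hadic_ext_scale hadic_ext_hmul /ser_add //=.
by rewrite IHn.
Qed.

Lemma hadic_ext0 f : hadic_ext f 0%N = f 0%N.
Proof. by rewrite /hadic_ext big_ord1 p_const. Qed.

Lemma hadic_extM f f' : hadic_ext (ser_mul f f') = ser_mul (hadic_ext f) (hadic_ext f').
Proof.
apply: ser_eqP => n; elim: n f f' => [|n IHn] f f'.
  by rewrite !ser_mul0 !hadic_ext0 ser_mul0.
set c := f 0%N; set c' := f' 0%N; set s := ser_tail f; set s' := ser_tail f'.
have eL : ser_mul f f' = ser_add (ser_cst (c * c'))
    (ser_hmul (ser_add (ser_mul (ser_cst c) s') (ser_mul s f'))).
  rewrite {1}(ser_decomp f) ser_mulDl ser_mul_hmull {1}(ser_decomp f').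
  by rewrite ser_mulDr ser_mul_hmulr ser_mul_cst ser_hmulD ser_addA.
have eR : ser_mul (hadic_ext f) (hadic_ext f') = ser_add
    (ser_add (ser_mul (p c) (p c')) (ser_hmul (ser_mul (p c) (hadic_ext s'))))
    (ser_hmul (ser_mul (hadic_ext s) (hadic_ext f'))).
  rewrite {1}(hadic_ext_rec f) ser_mulDl ser_mul_hmull {1}(hadic_ext_rec f').
  by rewrite ser_mulDr ser_mul_hmulr.
rewrite eL eR hadic_extD hadic_ext_cst hadic_ext_hmul hadic_extD /ser_add /= !IHn.
by rewrite hadic_ext_cst pM addrA.
Qed.

Variables (A : nzRingType) (act : (nat -> k) -> A -> A) (g : (nat -> U) -> A).
Hypothesis hg : kh_alg_iso act g.
Hypothesis p1 : p 1 = ser_cst 1.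

Lemma kh_alg_iso_hadic : kh_alg_iso act (g \o hadic_ext).
Proof.
split=> [|f f'|f f'||s f] /=.
- by apply: bij_comp; [case: hg | exact: hadic_ext_bijective].
- by rewrite hadic_extD (gD hg).
- by rewrite hadic_extM (gM hg).
- by rewrite hadic_ext_cst p1 (g1 hg).
- by rewrite hadic_ext_act (g_act hg).
Qed.

End HadicExtension.

Lemma kh_alg_iso_eq (k : fieldType) (U : algType k) (A : nzRingType)
    (act : (nat -> k) -> A -> A) (g g' : (nat -> U) -> A) :
  kh_alg_iso act g -> kh_alg_iso act g' ->
  (forall u, g (ser_cst u) = g' (ser_cst u)) -> g =1 g'.
Proof.
move=> hg hg' eg f; have [ginv gK Kg] : bijective g by case: hg.
suff ginv_g' n f0 : ginv (g' f0) n = f0 n.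
  by rewrite -[g' f](Kg (g' f)); congr g; apply: ser_eqP => n; rewrite ginv_g'.
have rec x : ginv (g' x) = ser_add (ser_cst (x 0%N)) (ser_hmul (ginv (g' (ser_tail x)))).
  apply: (g_inj hg); rewrite Kg (gD hg) (g_hmul hg) Kg eg -(g_hmul hg') -(gD hg').
  by rewrite -ser_decomp.
elim: n f0 => [|n IHn] x; rewrite rec /ser_add /= ?addr0 //.
by rewrite IHn add0r.
Qed.

(** * Existence and uniqueness of the b-trivialization *)

Lemma series_weightN2_factorF (k : fieldType) (U : algType k) (H F E : U)
    (hU : is_Usl2 H F E) (char0 : [pchar k] =i pred0) (x : nat -> U) :
  (forall m, br H (x m) = - (x m *+ 2)) -> x 0%N = F ->
  exists2 alpha : nat -> U, alpha 0%N = 1 /\ (forall m, weight0 H F E (alpha m))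
    & x = ser_mul (ser_cst F) alpha.
Proof.
move=> x_weight x0.
have fac m : {q | weight0 H F E q /\ x m = F * q}.
  apply: constructive_indefinite_description.
  by have [q wq ->] := weightN2_factorF hU char0 (x_weight m); exists q.
exists (fun m => if m is 0%N then 1 else sval (fac m)).
  by split => // -[|m]; [exact: gen1 | case: (svalP (fac m.+1))].
apply: ser_eqP => -[|m]; rewrite ser_mul_cstl ?x0 ?mulr1 //.
by case: (svalP (fac m.+1)).
Qed.

Lemma bar_a_iso_modh (k : fieldType) (U : algType k) (HU XmU XpU : U) (A : nzRingType)
    (act : (nat -> k) -> A -> A) (HA XmA XpA : A) (g g' : (nat -> U) -> A) :
  kh_algebra act -> (forall u, in_hA act (g' (ser_cst u) - g (ser_cst u))) ->
  bar_a_iso HU XmU XpU act HA XmA XpA g -> bar_a_iso HU XmU XpU act HA XmA XpA g'.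
Proof.
move=> hk g'g [g_inj g_surj gH gXm gXp].
have g'_close u a : in_hA act (g (ser_cst u) - a) -> in_hA act (g' (ser_cst u) - a).
  exact: in_hA_trans (g'g u).
split=> [u v g'uv|a|||]; try exact: g'_close.
  apply: g_inj; apply: (in_hA_trans hk (in_hA_sym hk (g'g u))).
  exact: in_hA_trans g'uv (g'g v).
have [u hu] := g_surj a; exists u.
exact: in_hA_trans hu (in_hA_sym hk (g'g u)).
Qed.

Section Existence.
Variables (k : fieldType) (U : algType k) (H F E : U).
Hypothesis hU : is_Usl2 H F E.
Hypothesis char0 : [pchar k] =i pred0.
Variables (A : nzRingType) (act : (nat -> k) -> A -> A) (HA XmA : A).
Hypothesis hk : kh_algebra act.
Hypothesis HA_XmA : HA * XmA - XmA * HA = - (XmA *+ 2).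
Variables (g : (nat -> U) -> A) (ginv : A -> nat -> U).
Hypothesis hg : kh_alg_iso act g.
Hypotheses (gK : cancel g ginv) (ginvK : cancel ginv g).
Hypothesis gH : g (ser_cst H) = HA.
Hypothesis gF : in_hA act (g (ser_cst F) - XmA).

Lemma XmA_factor :
  exists2 alpha : nat -> U, alpha 0%N = 1 /\ (forall m, weight0 H F E (alpha m))
    & XmA = g (ser_cst F) * g alpha.
Proof.
have weight_xm m : br H (ginv XmA m) = - (ginv XmA m *+ 2).
  apply: (br_g_cst_coef hg (y := ser_opp (fun n => ginv XmA n *+ 2))).
  by rewrite gH ginvK (g_opp hg) -(g_muln hg) ginvK.
have xm0 : ginv XmA 0%N = F.
  move: gF; rewrite -{1}[XmA]ginvK -(g_opp hg) -(gD hg) (in_hA_g hg) /ser_add /ser_opp /=.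
  by move/eqP; rewrite subr_eq0 => /eqP.
have [alpha alpha_spec xm_eq] := series_weightN2_factorF hU char0 weight_xm xm0.
by exists alpha => //; rewrite -(gM hg) -xm_eq ginvK.
Qed.

Lemma g_unit x : x 0%N = 1 -> exists2 y, g x * g y = 1 & y 0%N = 1 /\ g y * g x = 1.
Proof.
have rinv z : z 0%N = 1 -> exists2 y, g z * g y = 1 & y 0%N = 1.
  move=> z0; have [zinv zK zinvK] := ser_mul_bijective z0.
  exists (zinv (ser_cst 1)); first by rewrite -(gM hg) zinvK (g1 hg).
  by have := congr1 (fun s => s 0%N) (zinvK (ser_cst 1)); rewrite /= ser_mul0 z0 mul1r.
move=> x0; have [y xy y0] := rinv x x0; have [z yz _] := rinv y y0.
have xz : g x = g z by rewrite -[g x]mulr1 -yz mulrA xy mul1r.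
by exists y; rewrite // xz.
Qed.

Section Twist.
Variables alpha beta : nat -> U.
Hypothesis alpha_weight0 : forall m, weight0 H F E (alpha m).
Hypothesis XmA_alpha : XmA = g (ser_cst F) * g alpha.
Hypotheses (alpha_beta : g alpha * g beta = 1) (beta_alpha : g beta * g alpha = 1).

Definition Xp_twisted := g beta * g (ser_cst E).

Lemma g_alpha_comm u : (forall q, weight0 H F E q -> u * q = q * u) ->
  g (ser_cst u) * g alpha = g alpha * g (ser_cst u).
Proof.
move=> u_comm; rewrite -!(gM hg); congr g; apply: ser_eqP => m.
by rewrite ser_mul_cstl ser_mul_cstr u_comm.
Qed.

Lemma HA_g_beta : HA * g beta = g beta * HA.
Proof.
have HA_alpha : HA * g alpha = g alpha * HA.
  by rewrite -gH; apply: g_alpha_comm => q; exact: (weight0_comm hU (weight0H H F E)).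
by rewrite -[HA * _]mul1r -beta_alpha -mulrA (mulrA _ HA) -HA_alpha -!mulrA alpha_beta mulr1.
Qed.

Lemma sl2_rel_twisted : sl2_rel (HA : res_alg hk) XmA Xp_twisted.
Proof.
split=> //.
- rewrite -[_ - _]/(br HA Xp_twisted) brMr {1}/br HA_g_beta subrr mul0r add0r.
  by rewrite -gH -(g_cst_br hk hg) (brHE hU) (g_cstMn hk hg) mulrnAr.
- have EF_alpha := g_alpha_comm (fun q => weight0_comm hU (@weight0EF _ _ H F E)).
  rewrite /Xp_twisted XmA_alpha -mulrA (mulrA (g (ser_cst E))) -(g_cstM hg) EF_alpha.
  rewrite mulrA beta_alpha mul1r -(mulrA (g (ser_cst F))) (mulrA (g alpha)) alpha_beta mul1r.
  by rewrite -(g_cstM hg) -gH -(brEF hU) (g_cst_br hk hg) /br -!(g_cstM hg).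
Qed.

Variable psi : U -> res_alg hk.
Hypothesis psi_hom : alg_hom psi.
Hypotheses (psiH : psi H = HA) (psiF : psi F = XmA) (psiE : psi E = Xp_twisted).

Definition psi_lift u : nat -> U := ginv (psi u).

Lemma g_psi_lift u : g (psi_lift u) = psi u.
Proof. exact: ginvK. Qed.

Lemma psi_liftD u v : psi_lift (u + v) = ser_add (psi_lift u) (psi_lift v).
Proof. by apply: (g_inj hg); rewrite (gD hg) !g_psi_lift; case: psi_hom. Qed.

Lemma psi_liftM u v : psi_lift (u * v) = ser_mul (psi_lift u) (psi_lift v).
Proof. by apply: (g_inj hg); rewrite (gM hg) !g_psi_lift; case: psi_hom. Qed.

Lemma psi_liftZ (c : k) u : psi_lift (c *: u) = ser_act (ps_cst c) (psi_lift u).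
Proof. by apply: (g_inj hg); rewrite (g_act hg) !g_psi_lift; case: psi_hom. Qed.

Lemma psi_lift1 : psi_lift 1 = ser_cst 1.
Proof. by apply: (g_inj hg); rewrite (g1 hg) g_psi_lift; case: psi_hom. Qed.

Hypotheses (alpha0 : alpha 0%N = 1) (beta0 : beta 0%N = 1).

(* Reduction mod [h] of [psi_lift] is an algebra endomorphism of [U] fixing the
   generators: [X^-] and [X^+] were only twisted by units [alpha], [beta] that are
   [1] mod [h]. *)
Lemma psi_lift_const u : psi_lift u 0%N = u.
Proof.
have hom0 : alg_hom (fun u => psi_lift u 0%N).
  split=> [x y|x y||c x]; rewrite ?psi_liftD ?psi_liftM ?psi_lift1 ?psi_liftZ //.
  - by rewrite ser_mul0.
  - by rewrite ser_act_cst.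
apply: (Usl2_hom_eq hU hom0 (alg_hom_id U)) => /=; rewrite /psi_lift.
- by rewrite psiH -gH gK.
- by rewrite psiF XmA_alpha -(gM hg) gK ser_mul_cstl alpha0 mulr1.
- by rewrite psiE /Xp_twisted -(gM hg) gK ser_mul_cstr beta0 mul1r.
Qed.

Definition g_twisted := g \o hadic_ext psi_lift.

Lemma g_twisted_iso : kh_alg_iso act g_twisted.
Proof.
exact: (kh_alg_iso_hadic psi_liftD psi_liftM psi_liftZ psi_lift_const hg psi_lift1).
Qed.

Lemma g_twisted_cst u : g_twisted (ser_cst u) = psi u.
Proof. by rewrite /g_twisted /= (hadic_ext_cst psi_liftD) g_psi_lift. Qed.

Lemma g_twisted_modh u : in_hA act (g_twisted (ser_cst u) - g (ser_cst u)).
Proof.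
rewrite g_twisted_cst -g_psi_lift -(g_opp hg) -(gD hg) (in_hA_g hg).
by rewrite /ser_add /ser_opp psi_lift_const subrr.
Qed.

End Twist.

Lemma exists_b_trivializing (XpA : A) :
  bar_a_iso H F E act HA XmA XpA g ->
  exists g' : (nat -> U) -> A, b_trivializing H F E act HA XmA XpA g'.
Proof.
move=> gbar.
have [alpha [alpha0 alpha_weight0] XmA_alpha] := XmA_factor.
have [beta alpha_beta [beta0 beta_alpha]] := g_unit alpha0.
have [_ /(_ _ _ _ _ (sl2_rel_twisted alpha_weight0 XmA_alpha alpha_beta beta_alpha))]
  := hU.
move=> [psi [psi_hom psiH psiF psiE _]].
have g'_modh := g_twisted_modh XmA_alpha psi_hom psiH psiF psiE alpha0 beta0.
have g'_cst := g_twisted_cst psi_hom.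
exists (g_twisted psi); split.
- exact: (g_twisted_iso XmA_alpha psi_hom psiH psiF psiE alpha0 beta0).
- by rewrite g'_cst.
- by rewrite g'_cst.
- exact: bar_a_iso_modh hk g'_modh gbar.
Qed.

End Existence.

Section Uniqueness.
Variables (k : fieldType) (U : algType k) (H F E : U).
Hypothesis hU : is_Usl2 H F E.
Hypothesis char0 : [pchar k] =i pred0.
Variables (A : nzRingType) (act : (nat -> k) -> A -> A) (HA XmA : A).
Hypothesis hk : kh_algebra act.
Variables g1 g2 : (nat -> U) -> A.
Hypotheses (hg1 : kh_alg_iso act g1) (hg2 : kh_alg_iso act g2).
Hypotheses (g1H : g1 (ser_cst H) = HA) (g1F : g1 (ser_cst F) = XmA).
Hypotheses (g2H : g2 (ser_cst H) = HA) (g2F : g2 (ser_cst F) = XmA).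

Lemma kh_alg_iso_Xp_rel g : kh_alg_iso act g -> g (ser_cst H) = HA -> g (ser_cst F) = XmA ->
  br HA (g (ser_cst E)) = g (ser_cst E) *+ 2 /\ br (g (ser_cst E)) XmA = HA.
Proof.
by move=> hg <- <-; rewrite -!(g_cst_br hk hg) (brHE hU) (brEF hU) (g_cstMn hk hg).
Qed.

(* The difference of the two images of [X^+] is, coefficientwise, a vector of
   [ad H]-weight 2 killed by [ad X^-], hence zero. *)
Lemma b_trivializing_Xp : g2 (ser_cst E) = g1 (ser_cst E).
Proof.
have [HE1 EF1] := kh_alg_iso_Xp_rel hg1 g1H g1F.
have [HE2 EF2] := kh_alg_iso_Xp_rel hg2 g2H g2F.
set D := g2 (ser_cst E) - g1 (ser_cst E).
have [ginv _ ginvK] : bijective g1 by case: hg1.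
have D_H m : br H (ginv D m) = ginv D m *+ 2.
  apply: (br_g_cst_coef hg1 (y := fun m => ginv D m *+ 2)).
  by rewrite g1H -(g_muln hg1) !ginvK brBr HE1 HE2 mulrnBl.
have D_F m : br F (ginv D m) = 0.
  apply: (br_g_cst_coef hg1 (y := ser0 U)).
  by rewrite g1F (g_ser0 hg1) ginvK br_anti brDl brNl EF1 EF2 subrr oppr0.
have D0 : ginv D = ser0 U.
  by apply: ser_eqP => m; exact: (lowest_weight2_eq0 hU char0 (D_H m) (D_F m)).
by apply/eqP; rewrite -subr_eq0 -/D -(ginvK D) D0 (g_ser0 hg1).
Qed.

Lemma b_trivializing_eq : g1 =1 g2.
Proof.
apply: (kh_alg_iso_eq hg1 hg2) => u.
apply: (Usl2_hom_eq hU (g_cst_alg_hom hk hg1) (g_cst_alg_hom hk hg2)).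
- by rewrite /g_cst g1H g2H.
- by rewrite /g_cst g1F g2F.
- by rewrite /g_cst b_trivializing_Xp.
Qed.

End Uniqueness.

Theorem mainTheorem12 (k : fieldType) (char0 : [pchar k] =i pred0)
    (U : algType k) (HU XmU XpU : U) (HUsl2 : is_Usl2 HU XmU XpU)
    (A : nzRingType) (act : (nat -> k) -> A -> A) (HA XmA XpA : A)
    (Hdef : formal_deformation HU XmU XpU act HA XmA XpA)
    (Htriv : exists g : (nat -> U) -> A,
               h_trivializing HU XmU XpU act HA XmA XpA g) :
  exists g : (nat -> U) -> A,
    b_trivializing HU XmU XpU act HA XmA XpA g /\
    forall g' : (nat -> U) -> A,
      b_trivializing HU XmU XpU act HA XmA XpA g' -> forall f, g' f = g f.
Proof.
have [hk _ [_ HA_XmA] _] := Hdef.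
have [g [hg gH gbar]] := Htriv.
have [ginv gK ginvK] : bijective g by case: hg.
have gF : in_hA act (g (ser_cst XmU) - XmA) by case: gbar.
have [g1 g1_btriv] := exists_b_trivializing HUsl2 char0 hk HA_XmA hg gK ginvK gH gF gbar.
exists g1; split => // g2 [hg2 g2H g2F _].
have [hg1 g1H g1F _] := g1_btriv.
exact: (b_trivializing_eq HUsl2 char0 hk hg2 hg1 g2H g2F g1H g1F).
Qed.
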